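(* Let $F(\lambda,\mu)=\left(\frac{2\lambda^2}{4-\mu^2},\ \mu+\frac{\mu\lambda^2}{4-\mu^2}\right)$, $\phi(\lambda,\mu)=\frac{4-\lambda^2+\mu^2}{4\mu}$, $\psi(\lambda,\mu)=\frac{4-\mu^2+\lambda^2}{4\lambda}$. Fix $\eta\in\mathbb{C}$ with $\eta^2\neq1$, a square root $s$ of $\eta^2-1$, and let $H_\eta=\{(\lambda,\mu):4-\lambda^2+\mu^2=4\eta\mu\}$. Define $\varphi_\eta\colon H_\eta\dashrightarrow\mathbb{P}^1$ by $$\varphi_\eta(\lambda,\mu)=\frac{2-\lambda-\eta\mu-s\mu}{-2+\lambda+\eta\mu-s\mu}.$$ Then $\varphi_\eta$ is birational from $H_\eta$ to $\mathbb{P}^1$, $F$ maps $H_\eta$ into itself, and for generic $p\in H_\eta$: $$\varphi_\eta(F(p))=\varphi_\eta(p)^2,\qquad \psi(p)=\tfrac12\left(\varphi_\eta(p)+\varphi_\eta(p)^{-1}\right).$$ *)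

(* The base field is an arbitrary numClosedFieldType C
   (algebraically closed, characteristic 0), which covers C = complex numbers. *)
From HB Require Import structures.
From mathcomp Require Import all_boot all_order all_algebra.
Set Implicit Arguments. Unset Strict Implicit. Unset Printing Implicit Defensive.
Import Order.TTheory GRing.Theory Num.Theory.
Local Open Scope ring_scope.

Section Defs.
Variable C : numClosedFieldType.
Implicit Types (p : C * C) (eta s : C).

(* points p = (lambda, mu) *)
Definition F p : C * C :=
  (2 * p.1 ^+ 2 / (4 - p.2 ^+ 2), p.2 + p.2 * p.1 ^+ 2 / (4 - p.2 ^+ 2)).

Definition phi p : C := (4 - p.1 ^+ 2 + p.2 ^+ 2) / (4 * p.2).
Definition psi p : C := (4 - p.2 ^+ 2 + p.1 ^+ 2) / (4 * p.1).

Definition onH eta p : Prop := 4 - p.1 ^+ 2 + p.2 ^+ 2 = 4 * eta * p.2.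

Definition varphi_num eta s p : C := 2 - p.1 - eta * p.2 - s * p.2.
Definition varphi_den eta s p : C := -2 + p.1 + eta * p.2 - s * p.2.
Definition varphi eta s p : C := varphi_num eta s p / varphi_den eta s p.

(* "P holds for generic p in H_eta": outside a finite set of points of H_eta
   (H_eta is an irreducible curve, so nonempty Zariski opens are cofinite). *)
Definition generic_on_H eta (P : C * C -> Prop) : Prop :=
  exists S : seq (C * C), forall p, onH eta p -> p \notin S -> P p.

(* f = fnum/fden : H_eta --> P^1 is birational: it has a rational inverse
   t |-> (a1(t)/b1(t), a2(t)/b2(t)) : P^1 --> H_eta, the two compositions
   being the identity where defined (generically). P^1 is taken in its
   affine chart t, which is harmless birationally. *)
Definition birational_H_P1 eta (f fden : C * C -> C) : Prop :=
  exists a1 b1 a2 b2 : {poly C},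
    [/\ b1 != 0, b2 != 0,
     generic_on_H eta (fun p =>
        [/\ fden p != 0, b1.[f p] != 0, b2.[f p] != 0 &
            (a1.[f p] / b1.[f p], a2.[f p] / b2.[f p]) = p]) &
     exists T : seq C, forall t, t \notin T ->
        [/\ b1.[t] != 0, b2.[t] != 0,
            onH eta (a1.[t] / b1.[t], a2.[t] / b2.[t]),
            fden (a1.[t] / b1.[t], a2.[t] / b2.[t]) != 0 &
            f (a1.[t] / b1.[t], a2.[t] / b2.[t]) = t]].
End Defs.

From HB Require Import structures.
From mathcomp Require Import all_boot all_order all_algebra.
From mathcomp Require Import ring.
Set Implicit Arguments. Unset Strict Implicit. Unset Printing Implicit Defensive.
Import Order.TTheory GRing.Theory Num.Theory.
Local Open Scope ring_scope.

(* Put a := eta + s.  Then a != 0, a^2 != 1, eta = (a + 1/a)/2 and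
   s = (a - 1/a)/2 (lemma conic_parameter), so we may work with a fixed a.
   The conic H_eta is rational, parametrised through the point (2, 0) by
     param t = (2 (a^2 - 1) t, 2 a (1 - t^2)) / (a^2 - t^2),
   and in this parameter everything is explicit:
     varphi (param t) = t,  psi (param t) = (t + 1/t)/2,
     F (param t) = param (t^2),
   i.e. F is conjugate to t |-> t^2.  Conversely every point p of H_eta
   other than (2,0), (-2,0), (0,2a) equals param (varphi p), which gives
   birationality.  The conditions needed on t amount to the nonvanishing of a
   single nonzero polynomial, hence hold off a finite set of parameters, and
   its image under param, together with the three points above, is the finite
   exceptional set on the conic. *)

(* [field] leaves the nonvanishing of the denominators as a conjunction;
   split it so that each conjunct can be closed from the context. *)
Ltac field_nz := field; do ?[apply/andP; split].

Lemma onH_F (C : numClosedFieldType) (eta : C) (p : C * C) :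
  onH eta p -> 4 - p.2 ^+ 2 != 0 -> onH eta (F p).
Proof.
case: p => x y; rewrite /onH /F /= => on_conic y2_neq4.
have -> : 4 * eta * (y + y * x ^+ 2 / (4 - y ^+ 2)) =
          4 * eta * y * ((4 - y ^+ 2 + x ^+ 2) / (4 - y ^+ 2)) by field_nz.
by rewrite -on_conic; field_nz.
Qed.

Lemma nonroots_cofinite {K : closedFieldType} {q : {poly K}} :
  q != 0 -> exists T : seq K, forall t, t \notin T -> q.[t] != 0.
Proof.
move=> q_neq0; have [r def_q] := closed_field_poly_normal q.
exists r => t tNr; rewrite def_q hornerZ horner_prod mulf_neq0 ?lead_coef_eq0 //.
rewrite prodf_seq_neq0; apply/allP => z zr.
by rewrite hornerXsubC subr_eq0; apply: contraNneq tNr => ->.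
Qed.

Lemma polyC_subXn_neq0 (R : nzRingType) (c : R) (n : nat) :
  (0 < n)%N -> c%:P - 'X^n != 0.
Proof. by move=> n_gt0; rewrite -opprB oppr_eq0 monic_neq0 ?monicXnsubC. Qed.

Section Parametrization.
Variables (C : numClosedFieldType) (a : C).
Hypotheses (a_neq0 : a != 0) (a2_neq1 : a ^+ 2 - 1 != 0).

Definition eta_a : C := (a + a^-1) / 2.
Definition s_a : C := (a - a^-1) / 2.

(* Rational parametrisation of H_{eta_a} by lines through (2, 0). *)
Definition param (t : C) : C * C :=
  (2 * (a ^+ 2 - 1) * t / (a ^+ 2 - t ^+ 2),
   2 * a * (1 - t ^+ 2) / (a ^+ 2 - t ^+ 2)).

Section RegularParameter.
Variable t : C.
Hypothesis t_reg : a ^+ 2 - t ^+ 2 != 0.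

Lemma param_onH : onH eta_a (param t).
Proof. by rewrite /onH /eta_a /=; field_nz. Qed.

Lemma varphi_den_param :
  varphi_den eta_a s_a (param t) = 2 * (a ^+ 2 - 1) * (t - 1) / (a ^+ 2 - t ^+ 2).
Proof. by rewrite /varphi_den /eta_a /s_a /=; field_nz. Qed.

Lemma varphi_param : t - 1 != 0 -> varphi eta_a s_a (param t) = t.
Proof.
by move=> t_neq1; rewrite /varphi varphi_den_param /varphi_num /eta_a /s_a /=; field_nz.
Qed.

Lemma four_sub_param :
  4 - (param t).2 ^+ 2 = 4 * (a ^+ 2 - 1) * (a ^+ 2 - (t ^+ 2) ^+ 2) / (a ^+ 2 - t ^+ 2) ^+ 2.
Proof. by rewrite /=; field_nz. Qed.

Lemma F_param : a ^+ 2 - (t ^+ 2) ^+ 2 != 0 -> F (param t) = param (t ^+ 2).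
Proof.
move=> t2_reg; rewrite /F four_sub_param /param /=.
by congr pair; field_nz; rewrite ?mulf_neq0 ?expf_neq0.
Qed.

Lemma psi_param : t != 0 -> psi (param t) = (t + t^-1) / 2.
Proof. by move=> t_neq0; rewrite /psi /=; field_nz. Qed.
End RegularParameter.

Lemma s_a_neq0 : s_a != 0.
Proof.
have -> : s_a = (a ^+ 2 - 1) / (2 * a) by rewrite /s_a; field_nz.
by rewrite mulf_neq0 ?invr_eq0 ?mulf_neq0 ?pnatr_eq0.
Qed.

Lemma eta_a_sqr : eta_a ^+ 2 - 1 = s_a ^+ 2.
Proof. by rewrite /eta_a /s_a; field_nz. Qed.

(* Closed forms of the denominator of varphi and of varphi, using
   eta_a + s_a = a and eta_a - s_a = 1/a. *)
Lemma varphi_den_eta_a x y : varphi_den eta_a s_a (x, y) = (y - a * (2 - x)) / a.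
Proof. by rewrite /varphi_den /eta_a /s_a /=; field_nz. Qed.

Lemma varphi_eta_a x y : y - a * (2 - x) != 0 ->
  varphi eta_a s_a (x, y) = a * (2 - x - a * y) / (y - a * (2 - x)).
Proof.
by move=> d_neq0; rewrite /varphi varphi_den_eta_a /varphi_num /eta_a /s_a /=; field_nz.
Qed.

(* Off the line y = 0, the conic meets neither of the lines 2 - x = y and
   2 - x = -y (these would force eta_a^2 = 1). *)
Lemma onH_chords_neq0 {x y : C} : onH eta_a (x, y) -> y != 0 -> (2 - x) ^+ 2 - y ^+ 2 != 0.
Proof.
rewrite /onH /= => on_conic y_neq0; apply/eqP => chord.
have : 4 * (2 - x - eta_a * y) = (4 - x ^+ 2 + y ^+ 2 - 4 * eta_a * y) + ((2 - x) ^+ 2 - y ^+ 2).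
  by ring.
rewrite on_conic subrr chord addr0 => /eqP; rewrite mulf_eq0 pnatr_eq0 /= subr_eq0 => /eqP u_eq.
have : y ^+ 2 * s_a ^+ 2 = 0.
  by rewrite -eta_a_sqr -chord u_eq; ring.
by move/eqP; rewrite mulf_eq0 !expf_eq0 /= (negbTE y_neq0) (negbTE s_a_neq0).
Qed.

(* A point of the conic off y = 0 where varphi is defined is recovered from
   its coordinate: both differences p - param (varphi p) are multiples of the
   equation of the conic. *)
Lemma param_varphi {x y : C} (t := varphi eta_a s_a (x, y)) :
  onH eta_a (x, y) -> y != 0 -> varphi_den eta_a s_a (x, y) != 0 ->
  a ^+ 2 - t ^+ 2 != 0 /\ param t = (x, y).
Proof.
move=> on_conic y_neq0; rewrite varphi_den_eta_a mulf_eq0 invr_eq0 negb_or (negbTE a_neq0) andbT => d_neq0.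
have chord := onH_chords_neq0 on_conic y_neq0.
rewrite /t varphi_eta_a //.
have reg : a ^+ 2 - (a * (2 - x - a * y) / (y - a * (2 - x))) ^+ 2 =
    a ^+ 2 * (a ^+ 2 - 1) * ((2 - x) ^+ 2 - y ^+ 2) / (y - a * (2 - x)) ^+ 2.
  by field_nz.
rewrite reg; split; first by rewrite !mulf_neq0 ?invr_eq0 ?expf_neq0.
rewrite /param reg; congr pair; apply/eqP; rewrite -subr_eq0.
- rewrite [X in X == 0](_ : _ = (x - 2) * (4 - x ^+ 2 + y ^+ 2 - 4 * eta_a * y) /
                                ((2 - x) ^+ 2 - y ^+ 2)); last by rewrite /eta_a; field_nz.
  by rewrite on_conic subrr mulr0 mul0r.
- rewrite [X in X == 0](_ : _ = y * (4 - x ^+ 2 + y ^+ 2 - 4 * eta_a * y) /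
                                ((2 - x) ^+ 2 - y ^+ 2)); last by rewrite /eta_a; field_nz.
  by rewrite on_conic subrr mulr0 mul0r.
Qed.

(* The points of the conic where y = 0 or varphi_den = 0. *)
Definition exceptional_pts : seq (C * C) := [:: (2, 0); (-2, 0); (0, 2 * a)].

Lemma onH_exceptional {x y : C} : onH eta_a (x, y) -> (x, y) \notin exceptional_pts ->
  y != 0 /\ varphi_den eta_a s_a (x, y) != 0.
Proof.
rewrite /onH /= => on_conic pNexc.
have y_neq0 : y != 0.
  apply: contraNneq pNexc => y0.
  have : (x - 2) * (x + 2) = - (4 - x ^+ 2 + y ^+ 2 - 4 * eta_a * y) by rewrite y0; ring.
  rewrite on_conic subrr oppr0 => /eqP; rewrite mulf_eq0 subr_eq0 addr_eq0.
  by case/orP => /eqP ->; rewrite y0 !inE eqxx ?orbT.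
split=> //; rewrite varphi_den_eta_a mulf_neq0 ?invr_eq0 //.
apply: contraNneq pNexc => /eqP; rewrite subr_eq0 => /eqP y_eq.
have : (a ^+ 2 - 1) * (x - 2) * x = 4 - x ^+ 2 + y ^+ 2 - 4 * eta_a * y.
  by rewrite y_eq /eta_a; field_nz.
rewrite on_conic subrr => /eqP; rewrite !mulf_eq0 (negbTE a2_neq1) subr_eq0 /=.
case/orP => /eqP x_eq; move: y_eq y_neq0; rewrite x_eq => ->.
  by rewrite subrr mulr0 eqxx.
by rewrite subr0 mulrC !inE eqxx ?orbT.
Qed.

(* Its roots are the parameters t excluded by the identities above:
   t = 0, t^2 = 1, t^2 = a^2, t^4 = a^2. *)
Definition bad_param_poly : {poly C} :=
  'X * ('X^2 - 1) * ((a ^+ 2)%:P - 'X^2) * ((a ^+ 2)%:P - ('X^2) ^+ 2).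

Lemma bad_param_poly_neq0 : bad_param_poly != 0.
Proof.
by rewrite /bad_param_poly -exprM !mulf_neq0 ?polyX_eq0 ?polyC_subXn_neq0 ?monic_neq0 ?monicXnsubC.
Qed.

Lemma regular_param {t : C} : bad_param_poly.[t] != 0 ->
  [/\ t != 0, t - 1 != 0, t ^+ 2 - 1 != 0, a ^+ 2 - t ^+ 2 != 0 &
      a ^+ 2 - (t ^+ 2) ^+ 2 != 0].
Proof.
rewrite !hornerE !mulf_eq0 !negb_or -!andbA => /and4P [t_neq0 t2_neq1 t_reg t2_reg].
split=> //; apply: contraNneq t2_neq1 => t1.
by rewrite -(subrK 1 t) t1 add0r expr1n subrr.
Qed.

Lemma dynamics_at_param {t : C} (p := param t) : bad_param_poly.[t] != 0 ->
  [/\ (4 - p.2 ^+ 2 != 0) && (p.1 != 0),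
      (varphi_den eta_a s_a p != 0) && (varphi_den eta_a s_a (F p) != 0),
      varphi eta_a s_a p != 0,
      varphi eta_a s_a (F p) = varphi eta_a s_a p ^+ 2 &
      psi p = (varphi eta_a s_a p + (varphi eta_a s_a p)^-1) / 2].
Proof.
case/regular_param => t_neq0 t_neq1 t2_neq1 t_reg t2_reg.
rewrite /p F_param // !varphi_param // psi_param //.
rewrite four_sub_param // !varphi_den_param // /param /=.
by rewrite !mulf_neq0 ?invr_eq0 ?expf_neq0 ?pnatr_eq0.
Qed.

Lemma generic_point_param {T : seq C} {p : C * C} : onH eta_a p ->
  p \notin exceptional_pts ++ map param T ->
  [/\ varphi_den eta_a s_a p != 0, varphi eta_a s_a p \notin T,
      a ^+ 2 - varphi eta_a s_a p ^+ 2 != 0 & param (varphi eta_a s_a p) = p].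
Proof.
case: p => x y on_conic; rewrite mem_cat negb_or => /andP [pNexc pNT].
have [y_neq0 d_neq0] := onH_exceptional on_conic pNexc.
have [t_reg param_t] := param_varphi on_conic y_neq0 d_neq0.
split=> //; apply: contraNN pNT => tT.
by rewrite -param_t map_f.
Qed.

Definition param_num1 : {poly C} := (2 * (a ^+ 2 - 1))%:P * 'X.
Definition param_num2 : {poly C} := (2 * a)%:P * (1 - 'X^2).
Definition param_den : {poly C} := (a ^+ 2)%:P - 'X^2.

Lemma horner_param t :
  (param_num1.[t] / param_den.[t], param_num2.[t] / param_den.[t]) = param t.
Proof. by rewrite !hornerE. Qed.

Lemma birational_varphi_a :
  birational_H_P1 eta_a (varphi eta_a s_a) (varphi_den eta_a s_a).
Proof.
have [T regT] := nonroots_cofinite bad_param_poly_neq0.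
have den_neq0 t : a ^+ 2 - t ^+ 2 != 0 -> param_den.[t] != 0 by rewrite !hornerE.
have den_poly_neq0 : param_den != 0 by exact: polyC_subXn_neq0.
exists param_num1, param_den, param_num2, param_den; split=> //.
  exists (exceptional_pts ++ map param T) => p on_conic pNexc.
  have [d_neq0 _ t_reg param_t] := generic_point_param on_conic pNexc.
  by rewrite horner_param param_t den_neq0.
exists T => t tNT; have [_ t_neq1 _ t_reg _] := regular_param (regT t tNT).
have [_ /andP [d_neq0 _] _ _ _] := dynamics_at_param (regT t tNT).
rewrite horner_param den_neq0 // varphi_param //; split=> //; exact: param_onH.
Qed.

Lemma generic_dynamics_a :
  generic_on_H eta_a (fun p =>
    [/\ (4 - p.2 ^+ 2 != 0) && (p.1 != 0),
        (varphi_den eta_a s_a p != 0) && (varphi_den eta_a s_a (F p) != 0),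
        varphi eta_a s_a p != 0,
        varphi eta_a s_a (F p) = varphi eta_a s_a p ^+ 2 &
        psi p = (varphi eta_a s_a p + (varphi eta_a s_a p)^-1) / 2]).
Proof.
have [T regT] := nonroots_cofinite bad_param_poly_neq0.
exists (exceptional_pts ++ map param T) => p on_conic pNexc.
have [_ tNT _ <-] := generic_point_param on_conic pNexc.
exact: dynamics_at_param (regT _ tNT).
Qed.
End Parametrization.

(* Every admissible pair (eta, s) is of the form (eta_a, s_a) for a = eta + s,
   since (eta + s) (eta - s) = 1. *)
Lemma conic_parameter (C : numClosedFieldType) (eta s : C) :
  eta ^+ 2 != 1 -> s ^+ 2 = eta ^+ 2 - 1 ->
  exists a : C, [/\ a != 0, a ^+ 2 - 1 != 0, eta = eta_a a & s = s_a a].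
Proof.
move=> eta2_neq1 s2_eq; exists (eta + s).
have a_inv : (eta + s) * (eta - s) = 1 by rewrite mulrC -subr_sqr s2_eq; ring.
have a_neq0 : eta + s != 0.
  by apply: contra_eq_neq a_inv => ->; rewrite mul0r eq_sym oner_neq0.
have s_neq0 : s != 0.
  by apply: contra_eq_neq s2_eq => ->; rewrite expr2 mul0r eq_sym subr_eq0.
have a_invE : (eta + s)^-1 = eta - s by rewrite -[LHS]mulr1 -a_inv mulKf.
split=> //; try by rewrite /eta_a /s_a a_invE; field.
have -> : (eta + s) ^+ 2 - 1 = (eta + s) * (2 * s) by rewrite -[X in _ - X]a_inv; ring.
by rewrite !mulf_neq0 ?pnatr_eq0.
Qed.

Theorem lemma5p7 (C : numClosedFieldType) (eta s : C)
    (heta : eta ^+ 2 != 1) (hs : s ^+ 2 = eta ^+ 2 - 1) :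
  [/\ birational_H_P1 eta (varphi eta s) (varphi_den eta s),
      (forall p : C * C, onH eta p -> 4 - p.2 ^+ 2 != 0 -> onH eta (F p)) &
      generic_on_H eta (fun p =>
        [/\ (4 - p.2 ^+ 2 != 0) && (p.1 != 0),
            (varphi_den eta s p != 0) && (varphi_den eta s (F p) != 0),
            varphi eta s p != 0,
            varphi eta s (F p) = varphi eta s p ^+ 2 &
            psi p = (varphi eta s p + (varphi eta s p)^-1) / 2])].
Proof.
have [a [a_neq0 a2_neq1 -> ->]] := conic_parameter heta hs.
split; first exact: birational_varphi_a.
- by move=> p; apply: onH_F.
- exact: generic_dynamics_a.
Qed.
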